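(* Let $L$ be the real vector space of real $4\times 4$ matrices, and let $\tau:L\to L$ be a composition of a finite sequence of $3$-cyclic permutations of either rows or columns (i.e. each step cyclically permutes three of the rows, or three of the columns, of a matrix). Then there exists a continuous map (isotopy) $T:L\times[0,1]\to L$ such that $T(M,0)=M$, $T(M,1)=\tau(M)$ and $\operatorname{rank}T(M,t)=\operatorname{rank}M$ for all $M\in L$ and $t\in[0,1]$. *)

From HB Require Import structures.
From mathcomp Require Import all_boot all_order all_algebra all_fingroup.
From mathcomp Require Import all_classical all_reals all_analysis.
Set Implicit Arguments. Unset Strict Implicit. Unset Printing Implicit Defensive.
Import Order.TTheory GRing.Theory Num.Theory.
Import numFieldTopology.Exports numFieldNormedType.Exports.
Local Open Scope ring_scope.

Definition is_3cycle (n : nat) (s : 'S_n) : Prop :=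
  exists a b c : 'I_n,
    [/\ a != b, b != c, a != c,
        [/\ s a = b, s b = c & s c = a] &
        forall i, i != a -> i != b -> i != c -> s i = i].

Definition step_perm (R : Type) (n : nat) (st : bool * 'S_n)
  (M : 'M[R]_n) : 'M[R]_n :=
  if st.1 then row_perm st.2 M else col_perm st.2 M.

Definition compose_steps (R : Type) (n : nat) (l : seq (bool * 'S_n))
  : 'M[R]_n -> 'M[R]_n :=
  foldr (fun st f => step_perm st \o f) id l.

From HB Require Import structures.
From mathcomp Require Import all_boot all_order all_algebra all_fingroup.
From mathcomp Require Import all_classical all_reals all_analysis.
From mathcomp Require Import ring.
Set Implicit Arguments. Unset Strict Implicit. Unset Printing Implicit Defensive.
Import Order.TTheory GRing.Theory Num.Theory.
Import numFieldTopology.Exports numFieldNormedType.Exports.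
Local Open Scope ring_scope.
Local Open Scope classical_set_scope.

(* At time t, replace every step sigma of tau by its linear interpolation
   (1 - t) id + t sigma and compose these maps.  A row (column) permutation
   by sigma is left (right) multiplication by a permutation matrix P, so an
   interpolated step multiplies M by (1 - t) I + t P.  For a 3-cycle P^3 = I,
   and then a I + b P is invertible as soon as a^3 + b^3 != 0, because
   (a I + b P) (a^2 I - a b P + b^2 P^2) = (a^3 + b^3) I; finally
   (1 - t)^3 + t^3 = 3 (t - 1/2)^2 + 1/4 > 0.  Multiplying by invertible
   matrices preserves rank. *)

Lemma is_3cycle_expg3 (n : nat) (s : 'S_n) : is_3cycle s -> (s ^+ 3 = 1)%g.
Proof.
move=> [a [b [c [_ _ _ [sa sb sc] sfix]]]].
apply/permP => i; rewrite !expgSr expg0 mul1g !permM perm1.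
case: (eqVneq i a) => [->|ia]; first by rewrite sa sb sc.
case: (eqVneq i b) => [->|ib]; first by rewrite sb sc sa.
case: (eqVneq i c) => [->|ic]; first by rewrite sc sa sb.
by rewrite !sfix.
Qed.

Lemma perm_mxX (R : pzSemiRingType) (n k : nat) (s : 'S_n) :
  perm_mx (s ^+ k)%g = perm_mx s ^+ k :> 'M[R]_n.
Proof.
elim: k => [|k IHk]; first by rewrite expg0 expr0 perm_mx1.
by rewrite expgSr exprSr perm_mxM IHk mulmxE.
Qed.

(* Evaluate the sum-of-cubes identity in {poly F} at X = P. *)
Lemma unit_alg_add_scale_cube1 (F : fieldType) (A : unitAlgType F) (P : A)
    (a b : F) :
  P ^+ 3 = 1 -> a ^+ 3 + b ^+ 3 != 0 -> a%:A + b *: P \is a GRing.unit.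
Proof.
move=> P3 ab3; pose u : {poly F} := a%:P; pose v : {poly F} := b%:P.
pose q := u ^+ 2 - u * v * 'X + v ^+ 2 * 'X ^+ 2.
have ev_lin : horner_alg P (u + v * 'X) = a%:A + b *: P.
  by rewrite rmorphD rmorphM /= !horner_algC horner_algX mulr_algl.
have ev_cubes : horner_alg P ((u + v * 'X) * q) = (a ^+ 3 + b ^+ 3)%:A.
  have -> : (u + v * 'X) * q = u ^+ 3 + v ^+ 3 * 'X ^+ 3 by rewrite /q; ring.
  rewrite rmorphD rmorphXn rmorphM !rmorphXn /= !horner_algC horner_algX P3.
  by rewrite mulr1 -!(rmorphXn (in_alg A)) -rmorphD.
apply/unitrP; exists ((a ^+ 3 + b ^+ 3)^-1 *: horner_alg P q).
rewrite -scalerAl -scalerAr -ev_lin -!rmorphM /= [q * _]mulrC ev_cubes.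
by rewrite scalerA mulVf // scale1r.
Qed.

Lemma lerp_cube_sum_gt0 (R : realFieldType) (t : R) : 0 < (1 - t) ^+ 3 + t ^+ 3.
Proof.
have -> : (1 - t) ^+ 3 + t ^+ 3 = 3 * (t - 2^-1) ^+ 2 + 4^-1 by field.
by rewrite ltr_pwDr ?invr_gt0 // mulr_ge0 // sqr_ge0.
Qed.

Section LerpPermRank.
Variables (R : realFieldType) (n : nat) (s : 'S_n.+1) (t : R).
Hypothesis s3 : (s ^+ 3 = 1)%g.

Lemma lerp_perm_mx_unit : ((1 - t)%:A + t *: perm_mx s : 'M[R]_n.+1) \in unitmx.
Proof.
apply: unit_alg_add_scale_cube1; last by rewrite lt0r_neq0 ?lerp_cube_sum_gt0.
by rewrite -perm_mxX s3 perm_mx1.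
Qed.

(* The %R is needed: inside \rank, + denotes the sum of row spaces. *)
Lemma mxrank_lerp_row_perm (k : nat) (M : 'M[R]_(n.+1, k)) :
  \rank ((1 - t) *: M + t *: row_perm s M)%R = \rank M.
Proof.
have -> : (1 - t) *: M + t *: row_perm s M = ((1 - t)%:A + t *: perm_mx s) *m M.
  by rewrite row_permE mulmxDl -!scalemxAl mul1mx.
by rewrite eqmxMfull // row_full_unit lerp_perm_mx_unit.
Qed.

Lemma mxrank_lerp_col_perm (k : nat) (M : 'M[R]_(k, n.+1)) :
  \rank ((1 - t) *: M + t *: col_perm s M)%R = \rank M.
Proof.
by rewrite -mxrank_tr linearD !linearZ /= tr_col_perm mxrank_lerp_row_perm mxrank_tr.
Qed.

End LerpPermRank.

Definition step_lerp (R : realFieldType) (n : nat) (st : bool * 'S_n) (t : R)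
    (M : 'M[R]_n) : 'M[R]_n :=
  (1 - t) *: M + t *: step_perm st M.

Lemma mxrank_step_lerp (R : realFieldType) (n : nat) (st : bool * 'S_n.+1)
    (t : R) (M : 'M[R]_n.+1) :
  is_3cycle st.2 -> \rank (step_lerp st t M) = \rank M.
Proof.
case: st => [[] s] /= /is_3cycle_expg3 s3.
- exact: mxrank_lerp_row_perm.
- exact: mxrank_lerp_col_perm.
Qed.

Lemma step_permB (R : zmodType) (n : nat) (st : bool * 'S_n) (M N : 'M[R]_n) :
  step_perm st (M - N) = step_perm st M - step_perm st N.
Proof. by rewrite /step_perm; case: st.1; apply/matrixP => i j; rewrite !mxE. Qed.

Lemma norm_step_perm_le (R : realFieldType) (n : nat) (st : bool * 'S_n)
    (M : 'M[R]_n) :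
  `|step_perm st M| <= `|M|.
Proof.
rewrite [leLHS]/Num.Def.normr /= mx_normrE; apply: bigmax_le => // -[i j] _ /=.
rewrite /step_perm; case: st.1; rewrite mxE;
  rewrite [leRHS]/Num.Def.normr /= mx_normrE; apply/bigmax_geP; right => /=.
- by exists (st.2 i, j).
- by exists (i, st.2 j).
Qed.

Lemma continuous_step_perm (R : realFieldType) (n : nat) (st : bool * 'S_n) :
  continuous (step_perm st : 'M[R]_n -> 'M[R]_n).
Proof.
move=> M; apply/cvgrPdist_lt; first exact: alias_nbhs_filter.
move=> e e_gt0; near=> N.
rewrite -step_permB; apply: le_lt_trans (norm_step_perm_le _ _) _.
by near: N; apply: cvgr_dist_lt.
Unshelve. all: by end_near.
Qed.

Section StepsIsotopy.
Variables (R : realFieldType) (n : nat).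
Implicit Types (l : seq (bool * 'S_n)) (M : 'M[R]_n).

Definition steps_isotopy l (p : 'M[R]_n * R) : 'M[R]_n :=
  foldr (fun st f => step_lerp st p.2 \o f) id l p.1.

Lemma steps_isotopy_cons st l (p : 'M[R]_n * R) :
  steps_isotopy (st :: l) p = step_lerp st p.2 (steps_isotopy l p).
Proof. by []. Qed.

Lemma steps_isotopy0 l M : steps_isotopy l (M, 0) = M.
Proof.
elim: l => [|st l IHl] //.
by rewrite steps_isotopy_cons IHl /step_lerp subr0 scale1r scale0r addr0.
Qed.

Lemma steps_isotopy1 l M : steps_isotopy l (M, 1) = compose_steps l M.
Proof.
elim: l => [|st l IHl] //.
by rewrite steps_isotopy_cons IHl /step_lerp subrr scale0r add0r scale1r.
Qed.

Lemma continuous_steps_isotopy l : continuous (steps_isotopy l).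
Proof.
elim: l => [|st l IHl] p; first exact: cvg_fst.
have -> : steps_isotopy (st :: l) = (fun q => (1 - q.2) *: steps_isotopy l q)
    \+ (fun q => q.2 *: step_perm st (steps_isotopy l q)) by [].
apply: cvgD; apply: cvgZ.
- by apply: cvgB; [exact: cvg_cst | exact: cvg_snd].
- exact: IHl.
- exact: cvg_snd.
- by apply: (cvg_comp _ _ (IHl p)); apply: continuous_step_perm.
Qed.

End StepsIsotopy.

Lemma mxrank_steps_isotopy (R : realFieldType) (n : nat)
    (l : seq (bool * 'S_n.+1)) (M : 'M[R]_n.+1) (t : R) :
  (forall st, st \in l -> is_3cycle st.2) ->
  \rank (steps_isotopy l (M, t)) = \rank M.
Proof.
elim: l => [|st l IHl] // l3; rewrite steps_isotopy_cons mxrank_step_lerp.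
  by apply: IHl => st' st'l; apply: l3; rewrite in_cons st'l orbT.
by apply: l3; rewrite mem_head.
Qed.

Theorem corollary2p6 (R : realType) (l : seq (bool * 'S_4))
  (hl : forall st, st \in l -> is_3cycle st.2) :
  exists T : 'M[R]_(4,4) * R -> 'M[R]_(4,4),
    [/\ {within [set p : 'M[R]_(4,4) * R | 0 <= p.2 <= 1], continuous T},
        (forall M, T (M, 0) = M),
        (forall M, T (M, 1) = compose_steps l M) &
        (forall M t, 0 <= t <= 1 -> \rank (T (M, t)) = \rank M)].
Proof.
exists (steps_isotopy l); split.
- exact/continuous_subspaceT/continuous_steps_isotopy.
- exact: steps_isotopy0.
- exact: steps_isotopy1.
- by move=> M t _; apply: mxrank_steps_isotopy.
Qed.
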